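(* Let $(X,\mathcal{A},\mu)$ be a $q$-measure space, let $A_1,\dots,A_n\in\mathcal{A}$ be mutually disjoint, let $0<\alpha_1<\alpha_2<\dots<\alpha_n$, and let $f=\sum_{i=1}^n\alpha_i\chi_{A_i}$. Then \[ \int f\,d\mu=\sum_{k=1}^{n-1}\alpha_k\Big[\sum_{j=k+1}^n\mu(A_k\cup A_j)-(n-k-1)\mu(A_k)-\sum_{j=k+1}^n\mu(A_j)\Big]+\alpha_n\mu(A_n). \] Equivalently, with $\alpha_0=0$, $\int f\,d\mu=\sum_{k=1}^n(\alpha_k-\alpha_{k-1})\,\mu(A_k\cup\dots\cup A_n)$.
   Context: A $q$-measure space is a triple $(X,\mathcal{A},\mu)$ where $\mathcal{A}$ is a $\sigma$-algebra of subsets of $X$ and $\mu\colon\mathcal{A}\to[0,\infty)$ satisfies: (i) grade-2 additivity: $\mu(A\cup B\cup C)=\mu(A\cup B)+\mu(A\cup C)+\mu(B\cup C)-\mu(A)-\mu(B)-\mu(C)$ for mutually disjoint $A,B,C\in\mathcal{A}$; (ii) if $A_i\in\mathcal{A}$ is increasing then $\mu(\bigcup A_i)=\lim\mu(A_i)$; (iii) if $A_i\in\mathcal{A}$ is decreasing then $\mu(\bigcap A_i)=\lim\mu(A_i)$. $\chi_A$ denotes the characteristic function of $A$. For measurable $f\colon X\to\mathbb{R}$, $f$ is called $\mu$-integrable if $\lambda\mapsto\mu(f^{-1}(\lambda,\infty))$ and $\lambda\mapsto\mu(f^{-1}(-\infty,-\lambda))$ have finite Lebesgue integral over $[0,\infty)$,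 and then the $q$-integral is $\int f\,d\mu=\int_0^\infty\mu(f^{-1}(\lambda,\infty))\,d\lambda-\int_0^\infty\mu(f^{-1}(-\infty,-\lambda))\,d\lambda$. *)

From Stdlib Require Import Reals List Classical ClassicalEpsilon.
Open Scope R_scope.

Definition setU {X : Type} (A B : X -> Prop) : X -> Prop := fun x => A x \/ B x.
Definition setI {X : Type} (A B : X -> Prop) : X -> Prop := fun x => A x /\ B x.
Definition setC {X : Type} (A : X -> Prop) : X -> Prop := fun x => ~ A x.
Definition setT {X : Type} : X -> Prop := fun _ => True.
Definition bigcup {X : Type} (A : nat -> X -> Prop) : X -> Prop :=
  fun x => exists i, A i x.
Definition bigcap {X : Type} (A : nat -> X -> Prop) : X -> Prop :=
  fun x => forall i, A i x.

Definition sigma_algebra {X : Type} (S : (X -> Prop) -> Prop) : Prop :=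
  S setT /\
  (forall A, S A -> S (setC A)) /\
  (forall A : nat -> X -> Prop, (forall i, S (A i)) -> S (bigcup A)).

Definition increasing_sets {X : Type} (A : nat -> X -> Prop) : Prop :=
  forall i x, A i x -> A (S i) x.
Definition decreasing_sets {X : Type} (A : nat -> X -> Prop) : Prop :=
  forall i x, A (S i) x -> A i x.

Definition q_measure {X : Type} (S : (X -> Prop) -> Prop) (mu : (X -> Prop) -> R)
  : Prop :=
  sigma_algebra S /\
  (forall A, S A -> 0 <= mu A) /\
  (* grade-2 additivity *)
  (forall A B C, S A -> S B -> S C ->
     (forall x, A x -> B x -> False) ->
     (forall x, A x -> C x -> False) ->
     (forall x, B x -> C x -> False) ->
     mu (setU (setU A B) C) =
       mu (setU A B) + mu (setU A C) + mu (setU B C) - mu A - mu B - mu C) /\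
  (forall A : nat -> X -> Prop, (forall i, S (A i)) -> increasing_sets A ->
     Un_cv (fun i => mu (A i)) (mu (bigcup A))) /\
  (forall A : nat -> X -> Prop, (forall i, S (A i)) -> decreasing_sets A ->
     Un_cv (fun i => mu (A i)) (mu (bigcap A))).

Definition chi {X : Type} (A : X -> Prop) (x : X) : R :=
  if excluded_middle_informative (A x) then 1 else 0.

(* Sum a b g = g a + g (a+1) + ... + g b  (0 if b < a) *)
Definition Sum (a b : nat) (g : nat -> R) : R :=
  fold_right (fun j acc => g j + acc) 0 (seq a (S b - a)).

Definition has_integral_0_inf (g : R -> R) (l : R) : Prop :=
  (forall b, 0 <= b -> inhabited (Riemann_integrable g 0 b)) /\
  (forall eps, 0 < eps -> exists B, forall b (pr : Riemann_integrable g 0 b),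
      B <= b -> Rabs (RiemannInt pr - l) < eps).

Definition q_integral_is {X : Type} (mu : (X -> Prop) -> R) (f : X -> R) (I : R)
  : Prop :=
  exists l1 l2,
    has_integral_0_inf (fun lam => mu (fun x => lam < f x)) l1 /\
    has_integral_0_inf (fun lam => mu (fun x => f x < - lam)) l2 /\
    I = l1 - l2.

(* For 0 < α₁ < … < αₙ the level set {f > λ} is the tail union A_k ∪ … ∪ A_n
   whenever α_{k-1} < λ < α_k, and it is empty above αₙ, while {f < -λ} is
   always empty; so the layer-cake integral is Σ_k (α_k - α_{k-1}) μ(A_k ∪ … ∪ A_n).
   The first formula follows by summation by parts, since grade-2 additivity
   telescopes μ(A_k ∪ … ∪ A_n) - μ(A_{k+1} ∪ … ∪ A_n) into
   Σ_{j>k} μ(A_k ∪ A_j) - (n-k-1) μ(A_k) - Σ_{j>k} μ(A_j). *)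

From Stdlib Require Import Reals List Classical ClassicalEpsilon Lra Lia.
From Stdlib Require Import FunctionalExtensionality PropExtensionality.
From Coquelicot Require Import Coquelicot.
Open Scope R_scope.

Lemma pred_ext {X : Type} (P Q : X -> Prop) : (forall x, P x <-> Q x) -> P = Q.
Proof.
  intro H; apply functional_extensionality; intro x.
  apply propositional_extensionality; auto.
Qed.

Lemma Sum_succ a b g : (a <= S b)%nat -> Sum a (S b) g = Sum a b g + g (S b).
Proof.
  intro H; unfold Sum.
  replace (S (S b) - a)%nat with (S (S b - a)) by lia.
  rewrite seq_S, fold_right_app; cbn [fold_right].
  replace (a + (S b - a))%nat with (S b) by lia.
  induction (seq a (S b - a)); simpl; lra.
Qed.

Lemma Sum_last a b g : (1 <= a <= b)%nat -> Sum a b g = Sum a (b - 1) g + g b.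
Proof.
  intro H; destruct b as [|b]; [lia|].
  rewrite Sum_succ by lia; simpl; rewrite Nat.sub_0_r; reflexivity.
Qed.

Lemma Sum_ext a b g h :
  (forall i, (a <= i <= b)%nat -> g i = h i) -> Sum a b g = Sum a b h.
Proof.
  intro H; unfold Sum.
  assert (Hin : forall i, In i (seq a (S b - a)) -> g i = h i)
    by (intros i Hi; apply in_seq in Hi; apply H; lia).
  clear H; induction (seq a (S b - a)) as [|i l IH]; simpl; auto.
  rewrite IH, (Hin i); [reflexivity|left; reflexivity|].
  intros; apply Hin; right; assumption.
Qed.

Lemma Sum_minus a b g h : Sum a b (fun i => g i - h i) = Sum a b g - Sum a b h.
Proof. unfold Sum; induction (seq a (S b - a)); simpl; lra. Qed.

Lemma Sum_eq0 a b h : (forall i, (a <= i <= b)%nat -> h i = 0) -> Sum a b h = 0.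
Proof.
  intro H; rewrite (Sum_ext a b h (fun _ => 0)) by auto; unfold Sum.
  induction (seq a (S b - a)); simpl; lra.
Qed.

Lemma Sum_single a b j h : (a <= j <= b)%nat ->
  (forall i, (a <= i <= b)%nat -> i <> j -> h i = 0) -> Sum a b h = h j.
Proof.
  induction b as [|b IH]; intros Hj Hz.
  - assert (a = 0%nat /\ j = 0%nat) as [-> ->] by lia; unfold Sum; simpl; lra.
  - rewrite Sum_succ by lia.
    destruct (Nat.eq_dec j (S b)) as [->|Hne].
    + rewrite Sum_eq0; [lra|]; intros i Hi; apply Hz; lia.
    + rewrite IH, (Hz (S b)) by (lia || (intros; apply Hz; lia)); lra.
Qed.

Definition prev (a : nat -> R) (k : nat) : R :=
  if Nat.eqb k 1 then 0 else a (k - 1)%nat.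

Lemma prev_one a : prev a 1 = 0.
Proof. reflexivity. Qed.

Lemma prev_succ a k : prev a (S (S k)) = a (S k).
Proof. reflexivity. Qed.

Lemma Sum_by_parts (a D : nat -> R) m : (1 <= m)%nat ->
  Sum 1 m (fun k => a k * (D k - D (S k))) =
  Sum 1 m (fun k => (a k - prev a k) * D k) - a m * D (S m).
Proof.
  induction m as [|[|m] IH]; intro Hm; [lia| unfold Sum, prev; simpl; lra|].
  rewrite !(Sum_succ 1 (S m)), IH, prev_succ by lia; lra.
Qed.

Lemma incr_lt (a : nat -> R) n :
  (forall i, (1 <= i < n)%nat -> a i < a (S i)) ->
  forall i j, (1 <= i)%nat -> (i < j <= n)%nat -> a i < a j.
Proof.
  intros H i j Hi Hij; induction j as [|j IH]; [lia|].
  destruct (Nat.eq_dec i j) as [->|]; [apply H; lia|].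
  apply Rlt_trans with (a j); [apply IH|apply H]; lia.
Qed.

Lemma incr_le (a : nat -> R) n :
  (forall i, (1 <= i < n)%nat -> a i < a (S i)) ->
  forall i j, (1 <= i)%nat -> (i <= j <= n)%nat -> a i <= a j.
Proof.
  intros H i j Hi Hij; destruct (Nat.eq_dec i j) as [->|]; [lra|].
  left; apply (incr_lt a n); auto; lia.
Qed.

Definition tail_union {X : Type} (A : nat -> X -> Prop) (l h : nat) : X -> Prop :=
  fun x => exists j, (l <= j <= h)%nat /\ A j x.

Section TailUnion.

Variables (X : Type) (A : nat -> X -> Prop).

Lemma tail_union_empty l h : (h < l)%nat -> tail_union A l h = fun _ => False.
Proof.
  intro H; apply pred_ext; unfold tail_union; split; [intros [j [Hj _]]; lia|tauto].
Qed.

Lemma tail_union_single k : tail_union A k k = A k.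
Proof.
  apply pred_ext; unfold tail_union; split.
  - intros [j [Hj Hx]]; replace k with j by lia; auto.
  - intro Hx; exists k; split; auto; lia.
Qed.

Lemma tail_union_cons k h :
  (k <= h)%nat -> tail_union A k h = setU (A k) (tail_union A (S k) h).
Proof.
  intro H; apply pred_ext; unfold tail_union, setU; split.
  - intros [j [Hj Hx]]; destruct (Nat.eq_dec j k) as [->|]; [left; auto|].
    right; exists j; split; auto; lia.
  - intros [Hx|[j [Hj Hx]]]; [exists k|exists j]; split; auto; lia.
Qed.

Lemma tail_union_snoc l h :
  (l <= S h)%nat -> tail_union A l (S h) = setU (tail_union A l h) (A (S h)).
Proof.
  intro H; apply pred_ext; unfold tail_union, setU; split.
  - intros [j [Hj Hx]]; destruct (Nat.eq_dec j (S h)) as [->|]; [right; auto|].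
    left; exists j; split; auto; lia.
  - intros [[j [Hj Hx]]|Hx]; [exists j|exists (S h)]; split; auto; lia.
Qed.

Variable Sig : (X -> Prop) -> Prop.
Hypothesis HSig : sigma_algebra Sig.

Lemma sigma_empty : Sig (fun _ => False).
Proof.
  destruct HSig as [HT [HC _]].
  replace (fun _ : X => False) with (setC (@setT X)); [apply HC, HT|].
  apply pred_ext; unfold setC, setT; tauto.
Qed.

Lemma sigma_setU B C : Sig B -> Sig C -> Sig (setU B C).
Proof.
  destruct HSig as [_ [_ HU]]; intros HB HC.
  replace (setU B C) with (bigcup (fun i => match i with 0%nat => B | _ => C end)).
  - apply HU; intros [|i]; auto.
  - apply pred_ext; intro x; unfold bigcup, setU; split.
    + intros [[|i] H]; auto.
    + intros [H|H]; [exists 0%nat|exists 1%nat]; auto.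
Qed.

Lemma sigma_tail_union l h :
  (forall j, (l <= j <= h)%nat -> Sig (A j)) -> Sig (tail_union A l h).
Proof.
  induction h as [|h IH]; intro HA.
  - destruct l as [|l]; [rewrite tail_union_single; apply HA; lia|].
    rewrite tail_union_empty by lia; apply sigma_empty.
  - destruct (Compare_dec.le_lt_dec l (S h)).
    + rewrite tail_union_snoc by lia.
      apply sigma_setU; [apply IH; intros; apply HA|apply HA]; lia.
    + rewrite tail_union_empty by lia; apply sigma_empty.
Qed.

End TailUnion.

Section QMeasure.

Variables (X : Type) (Sig : (X -> Prop) -> Prop) (mu : (X -> Prop) -> R).
Hypothesis Hmu : q_measure Sig mu.

Lemma q_measure_empty : mu (fun _ => False) = 0.
Proof.
  destruct Hmu as [HS [_ [H2 _]]].
  pose proof (sigma_empty X Sig HS) as HE.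
  assert (E : setU (fun _ : X => False) (fun _ => False) = (fun _ => False))
    by (apply pred_ext; unfold setU; tauto).
  pose proof (H2 _ _ _ HE HE HE (fun _ h _ => h) (fun _ h _ => h) (fun _ h _ => h)) as K.
  rewrite !E in K; lra.
Qed.

Lemma q_measure_increment B C D : Sig B -> Sig C -> Sig D ->
  (forall x, B x -> C x -> False) -> (forall x, B x -> D x -> False) ->
  (forall x, C x -> D x -> False) ->
  mu (setU (setU B C) D) - mu (setU C D) =
  mu (setU B C) - mu C + (mu (setU B D) - mu B - mu D).
Proof.
  destruct Hmu as [_ [_ [H2 _]]]; intros; rewrite H2; auto; lra.
Qed.

Variables (A : nat -> X -> Prop) (n : nat).
Hypothesis HA : forall i, (1 <= i <= n)%nat -> Sig (A i).
Hypothesis Hdisj : forall i j, (1 <= i <= n)%nat -> (1 <= j <= n)%nat -> i <> j ->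
  forall x, A i x -> A j x -> False.

Lemma mu_tail_union_diff k h : (1 <= k)%nat -> (k < h <= n)%nat ->
  mu (tail_union A k h) - mu (tail_union A (S k) h) =
  Sum (S k) h (fun j => mu (setU (A k) (A j)) - mu (A j)) - INR (h - k - 1) * mu (A k).
Proof.
  intros Hk; induction h as [|h IH]; intros Hh; [lia|].
  destruct (Nat.eq_dec h k) as [->|Hne].
  - rewrite (tail_union_cons X A k), tail_union_single by lia.
    rewrite (Sum_single _ _ (S k)) by (lia || (intros; lia)).
    replace (S k - k - 1)%nat with 0%nat by lia; simpl; lra.
  - rewrite !(tail_union_snoc X A _ h), (tail_union_cons X A k h) by lia.
    rewrite q_measure_increment.
    + rewrite <- (tail_union_cons X A k h), IH, Sum_succ by lia.
      replace (S h - k - 1)%nat with (S (h - k - 1)) by lia; rewrite S_INR; lra.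
    + apply HA; lia.
    + apply sigma_tail_union; [apply Hmu|intros; apply HA; lia].
    + apply HA; lia.
    + intros x H1 [j [Hj H3]]; apply (Hdisj k j) with x; auto; lia.
    + intros x H1 H3; apply (Hdisj k (S h)) with x; auto; lia.
    + intros x [j [Hj H1]] H3; apply (Hdisj j (S h)) with x; auto; lia.
Qed.

Lemma Sum_tail_union_increments (alpha : nat -> R) : (1 <= n)%nat ->
  Sum 1 (n - 1) (fun k =>
      alpha k * (Sum (k + 1) n (fun j => mu (setU (A k) (A j)))
                 - INR (n - k - 1) * mu (A k)
                 - Sum (k + 1) n (fun j => mu (A j))))
    + alpha n * mu (A n)
  = Sum 1 n (fun k => alpha k * (mu (tail_union A k n) - mu (tail_union A (S k) n))).
Proof.
  intro Hn; rewrite (Sum_last 1 n) by lia; f_equal.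
  - apply Sum_ext; intros k Hk.
    rewrite mu_tail_union_diff, Sum_minus, Nat.add_1_r by lia; ring.
  - rewrite tail_union_single, tail_union_empty, q_measure_empty by lia; ring.
Qed.

End QMeasure.

Lemma chi_in {X : Type} (B : X -> Prop) x : B x -> chi B x = 1.
Proof. unfold chi; destruct (excluded_middle_informative (B x)); tauto. Qed.

Lemma chi_out {X : Type} (B : X -> Prop) x : ~ B x -> chi B x = 0.
Proof. unfold chi; destruct (excluded_middle_informative (B x)); tauto. Qed.

Section StepFunction.

Variables (X : Type) (A : nat -> X -> Prop) (alpha : nat -> R) (n : nat).
Hypothesis Hn : (1 <= n)%nat.
Hypothesis Hdisj : forall i j, (1 <= i <= n)%nat -> (1 <= j <= n)%nat -> i <> j ->
  forall x, A i x -> A j x -> False.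
Hypothesis Halpha1 : 0 < alpha 1%nat.
Hypothesis Halpha : forall i, (1 <= i < n)%nat -> alpha i < alpha (S i).

Let f x := Sum 1 n (fun i => alpha i * chi (A i) x).

Lemma alpha_pos i : (1 <= i <= n)%nat -> 0 < alpha i.
Proof.
  intro Hi; destruct (Nat.eq_dec i 1) as [->|]; auto.
  apply Rlt_trans with (alpha 1%nat); auto; apply (incr_lt alpha n); auto; lia.
Qed.

Lemma step_fun_in j x : (1 <= j <= n)%nat -> A j x -> f x = alpha j.
Proof.
  intros Hj Hx; unfold f; rewrite (Sum_single _ _ j _ Hj).
  - rewrite chi_in by auto; lra.
  - intros i Hi Hij; rewrite chi_out; [lra|].
    intro Hix; apply (Hdisj i j Hi Hj Hij x); auto.
Qed.

Lemma step_fun_out x : (forall j, (1 <= j <= n)%nat -> ~ A j x) -> f x = 0.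
Proof.
  intro Hx; apply Sum_eq0; intros i Hi; rewrite chi_out by auto; lra.
Qed.

Lemma level_set_mid k lam : (1 <= k <= n)%nat -> prev alpha k < lam < alpha k ->
  (fun x => lam < f x) = tail_union A k n.
Proof.
  intros Hk Hl; apply pred_ext; intro x; unfold tail_union.
  destruct (classic (exists j, (1 <= j <= n)%nat /\ A j x)) as [[j [Hj Hx]]|Hout].
  - rewrite (step_fun_in j) by auto; split.
    + intro Hlj; exists j; split; auto; split; [|lia].
      destruct (Compare_dec.le_lt_dec k j); auto; unfold prev in Hl.
      destruct (Nat.eqb_spec k 1); [lia|].
      pose proof (incr_le alpha n Halpha j (k - 1) ltac:(lia) ltac:(lia)); lra.
    + intros [j' [Hj' Hx']].
      destruct (Nat.eq_dec j j') as [<-|Hne]; [|exfalso; apply (Hdisj j j' Hj ltac:(lia) Hne x); auto].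
      pose proof (incr_le alpha n Halpha k j ltac:(lia) ltac:(lia)); lra.
  - rewrite step_fun_out by (intros j Hj Hx; apply Hout; eauto); split.
    + unfold prev in Hl; destruct (Nat.eqb_spec k 1); [lra|].
      pose proof (alpha_pos (k - 1) ltac:(lia)); lra.
    + intros [j [Hj Hx]]; exfalso; apply Hout; exists j; split; auto; lia.
Qed.

Lemma level_set_top lam : alpha n < lam -> (fun x => lam < f x) = fun _ => False.
Proof.
  intro Hl; apply pred_ext; intro x; split; [|tauto]; intro H.
  destruct (classic (exists j, (1 <= j <= n)%nat /\ A j x)) as [[j [Hj Hx]]|Hout].
  - rewrite (step_fun_in j) in H by auto.
    pose proof (incr_le alpha n Halpha j n ltac:(lia) ltac:(lia)); lra.
  - rewrite step_fun_out in H by (intros j Hj Hx; apply Hout; eauto).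
    pose proof (alpha_pos n ltac:(lia)); lra.
Qed.

Lemma level_set_neg lam : 0 < lam -> (fun x => f x < - lam) = fun _ => False.
Proof.
  intro Hl; apply pred_ext; intro x; split; [|tauto]; intro H.
  destruct (classic (exists j, (1 <= j <= n)%nat /\ A j x)) as [[j [Hj Hx]]|Hout].
  - rewrite (step_fun_in j) in H by auto; pose proof (alpha_pos j Hj); lra.
  - rewrite step_fun_out in H by (intros j Hj Hx; apply Hout; eauto); lra.
Qed.

End StepFunction.

Lemma is_RInt_const_on (g : R -> R) a b v l : a <= b -> l = (b - a) * v ->
  (forall x, a < x < b -> g x = v) -> is_RInt g a b l.
Proof.
  intros Hab -> Hg; apply is_RInt_ext with (fun _ => v); [|exact (is_RInt_const a b v)].
  intros x Hx; rewrite Rmin_left, Rmax_right in Hx by lra; symmetry; auto.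
Qed.

Lemma has_integral_0_inf_eventually_const (g : R -> R) c l :
  0 <= c -> (forall b, c <= b -> is_RInt g 0 b l) -> has_integral_0_inf g l.
Proof.
  intros Hc H; split.
  - intros b Hb; constructor; apply ex_RInt_Reals_0.
    apply (ex_RInt_Chasles_1 g 0 b (Rmax b c)); [split; auto; apply Rmax_l|].
    exists l; apply H, Rmax_r.
  - intros eps He; exists c; intros b pr Hb.
    rewrite <- RInt_Reals, (is_RInt_unique _ _ _ _ (H b Hb)), Rminus_diag, Rabs_R0; auto.
Qed.

Section LayerCake.

Variables (X : Type) (mu : (X -> Prop) -> R) (A : nat -> X -> Prop) (alpha : nat -> R).
Variable n : nat.
Hypothesis Hn : (1 <= n)%nat.
Hypothesis Hdisj : forall i j, (1 <= i <= n)%nat -> (1 <= j <= n)%nat -> i <> j ->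
  forall x, A i x -> A j x -> False.
Hypothesis Halpha1 : 0 < alpha 1%nat.
Hypothesis Halpha : forall i, (1 <= i < n)%nat -> alpha i < alpha (S i).

Let f x := Sum 1 n (fun i => alpha i * chi (A i) x).

Lemma is_RInt_upper_level m : (1 <= m <= n)%nat ->
  is_RInt (fun lam => mu (fun x => lam < f x)) 0 (alpha m)
    (Sum 1 m (fun k => (alpha k - prev alpha k) * mu (tail_union A k n))).
Proof.
  induction m as [|m IH]; intro Hm; [lia|].
  assert (Hprev : prev alpha (S m) < alpha (S m)).
  { destruct m as [|m]; [rewrite prev_one; lra|rewrite prev_succ; apply Halpha; lia]. }
  assert (Hstep : is_RInt (fun lam => mu (fun x => lam < f x)) (prev alpha (S m)) (alpha (S m))
     ((alpha (S m) - prev alpha (S m)) * mu (tail_union A (S m) n))).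
  { apply is_RInt_const_on with (mu (tail_union A (S m) n)); [lra|reflexivity|].
    intros lam Hlam.
    unfold f; rewrite (level_set_mid X A alpha n Hn Hdisj Halpha1 Halpha (S m)); auto; lia. }
  destruct m as [|m].
  - replace (Sum 1 1 _) with ((alpha 1%nat - prev alpha 1) * mu (tail_union A 1 n))
      by (unfold Sum; simpl; ring).
    rewrite prev_one in Hstep |- *; exact Hstep.
  - rewrite Sum_succ by lia.
    refine (is_RInt_Chasles _ _ (alpha (S m)) _ _ _ _ _); [apply IH; lia|].
    rewrite prev_succ in Hstep; exact Hstep.
Qed.

Hypothesis Hmu0 : mu (fun _ => False) = 0.

Lemma q_integral_step_fun :
  q_integral_is mu f (Sum 1 n (fun k => (alpha k - prev alpha k) * mu (tail_union A k n))).
Proof.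
  exists (Sum 1 n (fun k => (alpha k - prev alpha k) * mu (tail_union A k n))), 0.
  split; [|split; [|ring]].
  - apply has_integral_0_inf_eventually_const with (alpha n);
      [left; apply (alpha_pos alpha n); auto; lia|].
    intros b Hb; rewrite <- (Rplus_0_r (Sum 1 n _)).
    refine (is_RInt_Chasles _ _ (alpha n) _ _ _ _ _); [apply is_RInt_upper_level; lia|].
    apply is_RInt_const_on with 0; [lra|ring|]; intros lam Hlam.
    unfold f; rewrite (level_set_top X A alpha n Hn Hdisj Halpha1 Halpha) by lra; exact Hmu0.
  - apply has_integral_0_inf_eventually_const with 0; [lra|]; intros b Hb.
    apply is_RInt_const_on with 0; [lra|ring|]; intros lam Hlam.
    unfold f; rewrite (level_set_neg X A alpha n Hn Hdisj Halpha1 Halpha) by lra; exact Hmu0.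
Qed.

End LayerCake.

Theorem lemma4p2 (X : Type) (Sig : (X -> Prop) -> Prop) (mu : (X -> Prop) -> R)
  (Hmu : q_measure Sig mu)
  (n : nat) (Hn : (1 <= n)%nat)
  (A : nat -> X -> Prop) (alpha : nat -> R)
  (HA : forall i, (1 <= i <= n)%nat -> Sig (A i))
  (Hdisj : forall i j, (1 <= i <= n)%nat -> (1 <= j <= n)%nat -> i <> j ->
             forall x, A i x -> A j x -> False)
  (Halpha1 : 0 < alpha 1%nat)
  (Halpha : forall i, (1 <= i < n)%nat -> alpha i < alpha (S i)) :
  let f := fun x => Sum 1 n (fun i => alpha i * chi (A i) x) in
  q_integral_is mu f
    (Sum 1 (n - 1) (fun k =>
        alpha k * (Sum (k + 1) n (fun j => mu (setU (A k) (A j)))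
                   - INR (n - k - 1) * mu (A k)
                   - Sum (k + 1) n (fun j => mu (A j))))
     + alpha n * mu (A n))
  /\
  q_integral_is mu f
    (Sum 1 n (fun k =>
        (alpha k - (if Nat.eqb k 1 then 0 else alpha (k - 1)%nat))
        * mu (fun x => exists j, (k <= j <= n)%nat /\ A j x))).
Proof.
  intro f.
  pose proof (q_measure_empty X Sig mu Hmu) as Hmu0.
  pose proof (q_integral_step_fun X mu A alpha n Hn Hdisj Halpha1 Halpha Hmu0) as Hlayer.
  split; [|exact Hlayer].
  rewrite (Sum_tail_union_increments X Sig mu Hmu A n HA Hdisj alpha Hn).
  rewrite Sum_by_parts, tail_union_empty, Hmu0, Rmult_0_r, Rminus_0_r by lia.
  exact Hlayer.
Qed.
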